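(* Let $D\ge1$, let $\rho_X^G$ and $\rho_Y^G$ be any two independent $D$-mode bosonic Gaussian states, and let $\tau\in(0,1)$. Then for every order $p>1$ and every power $\kappa\ge\frac{p+1}{2}$, \[ \big(\mathbf{V}_p(\rho_X^G\boxplus_\tau\rho_Y^G)\big)^{\kappa}\ \ge\ \tau^\kappa\big(\mathbf{V}_p(\rho_X^G)\big)^{\kappa}+(1-\tau)^\kappa\big(\mathbf{V}_p(\rho_Y^G)\big)^{\kappa}, \] equivalently $\exp\!\big(\frac{\kappa}{D}S_p(\rho_X^G\boxplus_\tau\rho_Y^G)\big)\ge\tau^\kappa\exp\!\big(\frac{\kappa}{D}S_p(\rho_X^G)\big)+(1-\tau)^\kappa\exp\!\big(\frac{\kappa}{D}S_p(\rho_Y^G)\big)$.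
   Context: To each $D$-mode bosonic state $\rho_X$ one associates a quasi-probability distribution $q_X$ on phase space $\mathbb{C}^D$ (e.g. the Wigner function; normalized to total integral $1$ but possibly non-positive). The quantum (differential) Rényi entropy of order $p>0$, $p\neq1$, is $S_p(\rho_X)=\frac{1}{1-p}\log\int_{\mathbb{C}^D}q_X(z)^p\,dz$, and the quantum Rényi entropy power is $\mathbf{V}_p(\rho_X)=\exp\big(\frac{1}{D}S_p(\rho_X)\big)$. The quantum convolution ($\tau$-beam-splitter) is $\rho_X\boxplus_\tau\rho_Y=\mathrm{Tr}_Y[U_\tau(\rho_X\otimes\rho_Y)U_\tau^\dagger]$ with $U_\tau$ the Gaussian beam-splitter unitary acting on annihilation operators as $\hat a_Z=\sqrt{\tau}\,\hat a_X+\sqrt{1-\tau}\,\hat a_Y$; at the level of quasi-probability distributions the output $\rho_Z=\rho_X\boxplus_\tau\rho_Y$ has $q_Z(z')=\frac{1}{\tau}\int_{\mathbb{C}^D}q_X(z)\,q_Y\!\left(\frac{z'-\sqrt{1-\tau}\,z}{\sqrt{\tau}}\right)dz$ for $z'\in\mathbb{C}^D$. *)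

From HB Require Import structures.
From mathcomp Require Import all_boot all_order all_algebra.
From mathcomp Require Import all_classical all_reals all_analysis.
Set Implicit Arguments. Unset Strict Implicit. Unset Printing Implicit Defensive.
Import Order.TTheory GRing.Theory Num.Theory.
Local Open Scope ring_scope.

(* Phase space C^D is identified with R^(2D) = 'rV[R]_(2*D), with real
   quadrature coordinates r = (x_1..x_D, p_1..p_D). *)

(* Lebesgue integral over R^n, as an iterated integral of one-dimensional
   Lebesgue integrals (no n-dimensional Lebesgue measure in the library). *)
Fixpoint integral_Rn {R : realType} (n : nat) : ('rV[R]_n -> \bar R) -> \bar R :=
  match n return ('rV[R]_n -> \bar R) -> \bar R with
  | 0 => fun f => f 0
  | n'.+1 => fun f =>
      (\int[@lebesgue_measure R]_(x in [set: R])
         integral_Rn (fun v : 'rV[R]_n' =>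
            f (row_mx (const_mx x : 'rV[R]_1) v)))%E
  end.

Definition symplectic {R : realType} (D : nat) : 'M[R]_(D + D) :=
  block_mx 0 1%:M (- 1%:M) 0.

Definition bilin {R : realType} n (u : 'rV[R]_n) (A : 'M[R]_n) (v : 'rV[R]_n) : R :=
  (u *m A *m v^T) 0 0.

(* V is the covariance matrix of a bona fide D-mode Gaussian state:
   V symmetric and V + (i/2) Omega >= 0 (uncertainty principle, convention
   with vacuum covariance I/2).  Positivity of the Hermitian form
   (u - i v)^T (V + (i/2) Omega) (u + i v) for all real u, v unfolds to
   u^T V u + v^T V v - u^T Omega v >= 0. *)
Definition gaussian_cov {R : realType} (D : nat) (V : 'M[R]_(D + D)) : Prop :=
  V^T = V /\
  forall u v : 'rV[R]_(D + D),
    0 <= bilin u V u + bilin v V v - bilin u (symplectic D) v.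

Definition gauss_wigner {R : realType} (D : nat) (m : 'rV[R]_(D + D))
  (V : 'M[R]_(D + D)) (r : 'rV[R]_(D + D)) : R :=
  expR (- (bilin (r - m) (invmx V) (r - m)) / 2)
  / Num.sqrt ((2 * pi) ^+ (D + D) * \det V).

Definition renyi_entropy {R : realType} (D : nat) (p : R)
  (q : 'rV[R]_(D + D) -> R) : R :=
  (1 - p)^-1 * ln (fine (integral_Rn (fun z => (q z `^ p)%:E))).

Definition renyi_power {R : realType} (D : nat) (p : R)
  (q : 'rV[R]_(D + D) -> R) : R :=
  expR (renyi_entropy p q / D%:R).

(* Quasi-probability distribution of rho_X [+]_tau rho_Y, the output of the
   beam splitter a_Z = sqrt tau a_X + sqrt(1-tau) a_Y with Y traced out,
   i.e. the density of sqrt(tau) X + sqrt(1-tau) Y: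
   q_Z(z') = tau^{-D} \int q_X((z' - sqrt(1-tau) z)/sqrt tau) q_Y(z) dz
   (real dimension 2D, Jacobian tau^{-D}). *)
Definition quantum_conv {R : realType} (D : nat) (tau : R)
  (qX qY : 'rV[R]_(D + D) -> R) (z' : 'rV[R]_(D + D)) : R :=
  (tau ^+ D)^-1 *
  fine (integral_Rn (fun z =>
     (qX ((Num.sqrt tau)^-1 *: (z' - Num.sqrt (1 - tau) *: z)) * qY z)%:E)).

From HB Require Import structures.
From mathcomp Require Import all_boot all_order all_algebra.
From mathcomp Require Import all_classical all_reals all_analysis.
From mathcomp Require Import ring lra.
Import Order.TTheory GRing.Theory Num.Theory.
Local Open Scope ring_scope.
Set Implicit Arguments. Unset Strict Implicit. Unset Printing Implicit Defensive.

(* Gaussian Wigner functions are normal densities, so everything reduces to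
   covariance matrices.  The uncertainty relation makes a covariance matrix V
   positive definite; the Renyi entropy power of order p of the Gaussian with
   covariance V is 2 pi p^(1/(p-1)) (det V)^(1/2D); and the beam splitter maps
   the Gaussians with covariances VX and VY to the Gaussian with covariance
   tau VX + (1 - tau) VY.  For kappa = 1 the inequality is then Minkowski's
   determinant inequality det (A + B)^(1/n) >= det A^(1/n) + det B^(1/n), and
   kappa >= (p + 1)/2 >= 1 follows from superadditivity of x |-> x^kappa.
   Gaussian integrals over R^n, positivity of determinants and Minkowski's
   inequality are all proved by induction on n, splitting off the first
   coordinate with a Schur complement; the inductive step of Minkowski's
   inequality is Hoelder's inequality for two terms combined with the
   superadditivity of the Schur complement. *)

Lemma drsubmxD (V : zmodType) m n (A B : 'M[V]_(m + n)) :
  drsubmx (A + B) = drsubmx A + drsubmx B.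
Proof. by rewrite /drsubmx !raddfD. Qed.

Lemma mulmx1_invmx (R : comUnitRingType) n (A X : 'M[R]_n) :
  X *m A = 1%:M -> invmx A = X.
Proof.
move=> XA; have [_ uA] := mulmx1_unit XA.
by rewrite -[invmx A]mul1mx -XA -mulmxA mulmxV // mulmx1.
Qed.

Section BilinearForm.
Variable R : realType.

Lemma bilinDl n (u1 u2 v : 'rV[R]_n) A :
  bilin (u1 + u2) A v = bilin u1 A v + bilin u2 A v.
Proof. by rewrite /bilin !mulmxDl mxE. Qed.

Lemma bilinDr n (u v1 v2 : 'rV[R]_n) A :
  bilin u A (v1 + v2) = bilin u A v1 + bilin u A v2.
Proof. by rewrite /bilin linearD /= mulmxDr mxE. Qed.

Lemma bilinZl n (u v : 'rV[R]_n) A a : bilin (a *: u) A v = a * bilin u A v.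
Proof. by rewrite /bilin -!scalemxAl mxE. Qed.

Lemma bilinZr n (u v : 'rV[R]_n) A a : bilin u A (a *: v) = a * bilin u A v.
Proof. by rewrite /bilin linearZ /= -scalemxAr mxE. Qed.

Lemma bilinNl n (u v : 'rV[R]_n) A : bilin (- u) A v = - bilin u A v.
Proof. by rewrite -scaleN1r bilinZl mulN1r. Qed.

Lemma bilinNr n (u v : 'rV[R]_n) A : bilin u A (- v) = - bilin u A v.
Proof. by rewrite -scaleN1r bilinZr mulN1r. Qed.

Lemma bilin0l n (v : 'rV[R]_n) A : bilin 0 A v = 0.
Proof. by rewrite /bilin !mul0mx mxE. Qed.

Lemma bilinDm n (u v : 'rV[R]_n) A B :
  bilin u (A + B) v = bilin u A v + bilin u B v.
Proof. by rewrite /bilin mulmxDr mulmxDl mxE. Qed.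

Lemma bilinZm n (u v : 'rV[R]_n) A a : bilin u (a *: A) v = a * bilin u A v.
Proof. by rewrite /bilin -scalemxAr -scalemxAl mxE. Qed.

Lemma bilinNm n (u v : 'rV[R]_n) A : bilin u (- A) v = - bilin u A v.
Proof. by rewrite /bilin mulmxN mulNmx mxE. Qed.

Lemma bilinMl n (u v : 'rV[R]_n) M A : bilin (u *m M) A v = bilin u (M *m A) v.
Proof. by rewrite /bilin !mulmxA. Qed.

Lemma bilin_sym n (u v : 'rV[R]_n) A : A^T = A -> bilin u A v = bilin v A u.
Proof.
move=> sA; have e : (u *m A *m v^T)^T = v *m A *m u^T.
  by rewrite !trmx_mul trmxK sA mulmxA.
by rewrite /bilin -e [RHS]mxE.
Qed.

Lemma bilin_row0 n (A : 'M[R]_(1 + n)) (v : 'rV[R]_n) :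
  bilin (row_mx 0 v) A (row_mx 0 v) = bilin v (drsubmx A) v.
Proof.
rewrite /bilin -{1}[A]submxK mul_row_block !mul0mx !add0r tr_row_mx mul_row_col.
by rewrite trmx0 mulmx0 add0r.
Qed.

End BilinearForm.

Definition posdef {R : realType} n (A : 'M[R]_n) :=
  A^T = A /\ forall z : 'rV[R]_n, z != 0 -> 0 < bilin z A z.

Section SchurComplement.
Variables (R : realType) (n : nat) (A : 'M[R]_(1 + n)).

(* For A = [[a, b], [b^T, C]] this is the vector (1, - b C^-1), whose value
   under the quadratic form of A is the Schur complement a - b C^-1 b^T. *)
Definition schur_shift : 'rV[R]_n := - (ursubmx A *m invmx (drsubmx A)).
Definition schur_vec : 'rV[R]_(1 + n) := row_mx 1%:M schur_shift.
Definition schur_compl : R := bilin schur_vec A schur_vec.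

Lemma schur_vec_neq0 : schur_vec != 0.
Proof.
rewrite row_mx_eq0 negb_and; apply/orP; left.
by apply/eqP => /matrixP /(_ 0 0) /eqP; rewrite !mxE eqxx oner_eq0.
Qed.

Hypotheses (sA : A^T = A) (uC : drsubmx A \in unitmx).

Lemma schur_shift_ursub : ursubmx A + schur_shift *m drsubmx A = 0.
Proof. by rewrite /schur_shift mulNmx -mulmxA mulVmx // mulmx1 subrr. Qed.

Lemma schur_vec_mulmx :
  schur_vec *m A = row_mx (ulsubmx A + schur_shift *m dlsubmx A) 0.
Proof. by rewrite -{1}[A]submxK mul_row_block !mul1mx schur_shift_ursub. Qed.

Lemma schur_complE : schur_compl%:M = ulsubmx A + schur_shift *m dlsubmx A.
Proof.
rewrite [RHS]mx11_scalar /schur_compl /bilin schur_vec_mulmx tr_row_mx mul_row_col.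
by rewrite mul0mx addr0 tr_scalar_mx mulmx1.
Qed.

Lemma bilin_schur_vec_row0 (v : 'rV[R]_n) : bilin schur_vec A (row_mx 0 v) = 0.
Proof.
by rewrite /bilin schur_vec_mulmx tr_row_mx mul_row_col trmx0 mulmx0 mul0mx addr0 mxE.
Qed.

Lemma bilin_schur (x : R) (u : 'rV[R]_n) :
  bilin (row_mx x%:M u) A (row_mx x%:M u) =
  schur_compl * x ^+ 2 + bilin (u - x *: schur_shift) (drsubmx A) (u - x *: schur_shift).
Proof.
have -> : row_mx x%:M u = x *: schur_vec + row_mx 0 (u - x *: schur_shift).
  by rewrite scale_row_mx add_row_mx addr0 addrC subrK scalemx1.
rewrite -bilin_row0 bilinDl !bilinDr !bilinZl !bilinZr.
rewrite [bilin (row_mx 0 _) A schur_vec]bilin_sym //.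
by rewrite !bilin_schur_vec_row0 !mulr0 !addr0 add0r mulrA -expr2 mulrC.
Qed.

Lemma det_schur : \det A = schur_compl * \det (drsubmx A).
Proof.
pose P : 'M[R]_(1 + n) := block_mx 1%:M schur_shift 0 1%:M.
have detP : \det P = 1 by rewrite det_ublock !det1 mulr1.
have : P *m A *m P^T = block_mx schur_compl%:M 0
    (dlsubmx A + drsubmx A *m schur_shift^T) (drsubmx A).
  rewrite -{1}[A]submxK mulmx_block tr_block_mx trmx0 mulmx_block schur_complE.
  rewrite !mul1mx !mul0mx !add0r schur_shift_ursub !mul0mx !addr0 tr_scalar_mx.
  by rewrite !mulmx1 !mulmx0 add0r trmx1 mulmx1.
move/(congr1 determinant); rewrite !det_mulmx det_tr detP mul1r mulr1 det_lblock.
by move=> ->; rewrite det_scalar1.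
Qed.

End SchurComplement.

Section PositiveDefinite.
Variable R : realType.

Lemma posdef_ge0 n (A : 'M[R]_n) z : posdef A -> 0 <= bilin z A z.
Proof.
case=> _ pA; have [->|z0] := eqVneq z 0; first by rewrite bilin0l.
exact/ltW/pA.
Qed.

Lemma posdefD n (A B : 'M[R]_n) : posdef A -> posdef B -> posdef (A + B).
Proof.
case=> sA pA [sB pB]; split; first by rewrite linearD /= sA sB.
by move=> z z0; rewrite bilinDm addr_gt0 ?pA ?pB.
Qed.

Lemma posdefZ n (A : 'M[R]_n) a : 0 < a -> posdef A -> posdef (a *: A).
Proof.
move=> a0 [sA pA]; split; first by rewrite linearZ /= sA.
by move=> z z0; rewrite bilinZm mulr_gt0 ?pA.
Qed.

Lemma posdef_drsub n (A : 'M[R]_(1 + n)) : posdef A -> posdef (drsubmx A).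
Proof.
case=> sA pA; split; first by rewrite trmx_drsub sA.
move=> z z0; rewrite -bilin_row0; apply: pA.
by rewrite row_mx_eq0 negb_and z0 orbT.
Qed.

Lemma schur_compl_gt0 n (A : 'M[R]_(1 + n)) : posdef A -> 0 < schur_compl A.
Proof. by case=> _ pA; exact/pA/schur_vec_neq0. Qed.

Lemma posdef_det_gt0 n (A : 'M[R]_n) : posdef A -> 0 < \det A.
Proof.
elim: n A => [|n IH] A pA; first by rewrite det_mx00 ltr01.
have pA' : posdef (A : 'M[R]_(1 + n)) by [].
have dC := IH _ (posdef_drsub pA').
by rewrite det_schur ?pA'.1 ?unitmxE ?unitfE ?gt_eqF // mulr_gt0 ?schur_compl_gt0.
Qed.

Lemma posdef_unitmx n (A : 'M[R]_n) : posdef A -> A \in unitmx.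
Proof. by move=> pA; rewrite unitmxE unitfE gt_eqF // posdef_det_gt0. Qed.

Lemma posdef_drsub_unitmx n (A : 'M[R]_(1 + n)) :
  posdef A -> drsubmx A \in unitmx.
Proof. by move=> pA; exact/posdef_unitmx/posdef_drsub. Qed.

Lemma posdefV n (A : 'M[R]_n) : posdef A -> posdef (invmx A).
Proof.
move=> pA; have uA := posdef_unitmx pA; case: pA => sA pA.
split; first by rewrite trmx_inv sA.
move=> z z0; have -> : bilin z (invmx A) z = bilin (z *m invmx A) A (z *m invmx A).
  by rewrite bilinMl /bilin trmx_mul trmx_inv sA !mulmxA mulmxKV.
apply: pA; apply: contra z0 => /eqP zA0.
by rewrite -(mulmxKV uA z) zA0 mul0mx.
Qed.

(* The Schur complement is the minimum of the quadratic form over vectors with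
   first coordinate 1, attained at schur_vec; hence it is superadditive. *)
Lemma schur_compl_superadd n (A B : 'M[R]_(1 + n)) : posdef A -> posdef B ->
  schur_compl A + schur_compl B <= schur_compl (A + B).
Proof.
move=> pA pB; rewrite {3}/schur_compl bilinDm.
rewrite !bilin_schur ?posdef_drsub_unitmx ?pA.1 ?pB.1 // expr1n !mulr1.
by apply: lerD; rewrite lerDl; apply/posdef_ge0/posdef_drsub.
Qed.

End PositiveDefinite.

Section PowRInequalities.
Variable R : realType.

Lemma powR_hoelder2 (a1 a2 b1 b2 t : R) :
  0 <= a1 -> 0 <= a2 -> 0 <= b1 -> 0 <= b2 -> 0 < t < 1 ->
  a1 `^ t * b1 `^ (1 - t) + a2 `^ t * b2 `^ (1 - t) <=
  (a1 + a2) `^ t * (b1 + b2) `^ (1 - t).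
Proof.
move=> a10 a20 b10 b20 /andP[t0 t1].
have pq : (t^-1)^-1 + ((1 - t)^-1)^-1 = 1 by rewrite !invrK addrC subrK.
have := hoelder2 (powR_ge0 a1 t) (powR_ge0 a2 t) (powR_ge0 b1 (1 - t))
  (powR_ge0 b2 (1 - t)) _ _ pq.
rewrite !invr_gt0 subr_gt0 invrK => /(_ t0 t1).
by rewrite !invrK -!powRrM !mulfV ?gt_eqF ?subr_gt0 // !powRr1.
Qed.

Lemma powR_superadd (a b k : R) : 0 <= a -> 0 <= b -> 1 <= k ->
  a `^ k + b `^ k <= (a + b) `^ k.
Proof.
move=> a0 b0 k1; have k0 : 0 < k by apply: lt_le_trans k1.
have k1' : 0 <= k - 1 by rewrite subr_ge0.
rewrite -(mulr_powRB1 a0 k0) -(mulr_powRB1 b0 k0).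
rewrite -(mulr_powRB1 (addr_ge0 a0 b0) k0) mulrDl.
by apply: lerD; apply: ler_wpM2l => //; apply: ge0_ler_powR => //;
  rewrite ?nnegrE ?addr_ge0 ?lerDl ?lerDr.
Qed.

Lemma powR_convex_superadd (t x y w k : R) : 0 < t < 1 -> 0 <= x -> 0 <= y ->
  t * x + (1 - t) * y <= w -> 1 <= k ->
  t `^ k * x `^ k + (1 - t) `^ k * y `^ k <= w `^ k.
Proof.
move=> /andP[t0 t1] x0 y0 le_w k1; have t1' : 0 < 1 - t by rewrite subr_gt0.
have tx := mulr_ge0 (ltW t0) x0; have ty := mulr_ge0 (ltW t1') y0.
rewrite -!powRM ?(ltW t0) ?(ltW t1') //.
apply: le_trans (powR_superadd tx ty k1) _; apply: ge0_ler_powR => //.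
- exact: le_trans ler01 k1.
- by rewrite nnegrE addr_ge0.
- by rewrite nnegrE (le_trans _ le_w) ?addr_ge0.
Qed.

End PowRInequalities.

Section MinkowskiDeterminant.
Variable R : realType.

Lemma det_schur_powR n (A : 'M[R]_(1 + n.+1)) : posdef A ->
  \det A `^ (n.+2%:R)^-1 = schur_compl A `^ (n.+2%:R)^-1 *
    (\det (drsubmx A) `^ (n.+1%:R)^-1) `^ (1 - (n.+2%:R)^-1).
Proof.
move=> pA; have s0 := schur_compl_gt0 pA.
have d0 := posdef_det_gt0 (posdef_drsub pA).
rewrite det_schur ?pA.1 ?posdef_drsub_unitmx // powRM ?ltW // -powRrM.
congr (_ * _ `^ _).
by rewrite [n.+2%:R]mulrSr; field; rewrite -mulrS -mulrSr !pnatr_eq0.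
Qed.

Lemma minkowski_det n (A B : 'M[R]_n.+1) : posdef A -> posdef B ->
  \det A `^ (n.+1%:R)^-1 + \det B `^ (n.+1%:R)^-1 <= \det (A + B) `^ (n.+1%:R)^-1.
Proof.
elim: n A B => [|n IH] A B pA pB.
  have := posdef_det_gt0 pA; have := posdef_det_gt0 pB; rewrite !det_mx11 => b0 a0.
  by rewrite mxE mulr1n invr1 !powRr1 ?addr_ge0 ?(ltW a0) ?(ltW b0).
have pA' : posdef (A : 'M[R]_(1 + n.+1)) by [].
have pB' : posdef (B : 'M[R]_(1 + n.+1)) by [].
rewrite (det_schur_powR pA') (det_schur_powR pB') (det_schur_powR (posdefD pA' pB')).
set t := (n.+2%:R)^-1.
have t01 : 0 < t < 1 by rewrite invr_gt0 ltr0n invf_lt1 ?ltr0n ?ltr1n.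
have sA := schur_compl_gt0 pA'; have sB := schur_compl_gt0 pB'.
apply: le_trans (powR_hoelder2 (ltW sA) (ltW sB) (powR_ge0 _ _) (powR_ge0 _ _) t01) _.
have [t0 t1] := andP t01.
have sAB := schur_compl_gt0 (posdefD pA' pB').
apply: ler_pM; rewrite ?powR_ge0 //; apply: ge0_ler_powR.
- exact: ltW.
- by rewrite nnegrE addr_ge0 ?ltW.
- by rewrite nnegrE ltW.
- exact: schur_compl_superadd.
- by rewrite subr_ge0 ltW.
- by rewrite nnegrE addr_ge0 ?powR_ge0.
- by rewrite nnegrE powR_ge0.
by rewrite drsubmxD; apply: IH; apply: posdef_drsub.
Qed.

Lemma det_scale_powR n (A : 'M[R]_n.+1) a : 0 < a -> posdef A ->
  \det (a *: A) `^ (n.+1%:R)^-1 = a * \det A `^ (n.+1%:R)^-1.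
Proof.
move=> a0 pA; rewrite detZ powRM ?exprn_ge0 ?ltW ?posdef_det_gt0 //.
by rewrite -powR_mulrn ?ltW // -powRrM mulfV ?pnatr_eq0 // powRr1 ?ltW.
Qed.

Lemma minkowski_det_convex n (A B : 'M[R]_n.+1) t :
  posdef A -> posdef B -> 0 < t < 1 ->
  t * \det A `^ (n.+1%:R)^-1 + (1 - t) * \det B `^ (n.+1%:R)^-1 <=
  \det (t *: A + (1 - t) *: B) `^ (n.+1%:R)^-1.
Proof.
move=> pA pB /andP[t0 t1]; have t1' : 0 < 1 - t by rewrite subr_gt0.
by rewrite -!det_scale_powR //; apply: minkowski_det; apply: posdefZ.
Qed.

End MinkowskiDeterminant.

Section GaussianIntegral.
Variable R : realType.

Lemma integral_gauss1 (k a m : R) : 0 < a ->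
  (\int[@lebesgue_measure R]_(x in [set: R]) (k * expR (- (a * (x - m) ^+ 2) / 2))%:E)%E =
  (k * Num.sqrt (2 * pi / a))%:E.
Proof.
move=> a0; set sg := (Num.sqrt a)^-1.
have sg0 : sg != 0 by rewrite invr_eq0 gt_eqF // sqrtr_gt0.
have sg2 : sg ^+ 2 = a^-1 by rewrite exprVn sqr_sqrtr // ltW.
have peak0 : normal_peak sg != 0 by rewrite gt_eqF // normal_peak_gt0.
have e x : k * expR (- (a * (x - m) ^+ 2) / 2) = k / normal_peak sg * normal_pdf m sg x.
  rewrite normal_pdfE // /normal_fun -mulrA mulKf //; congr (k * expR _).
  by rewrite sg2; field; rewrite gt_eqF.
under eq_integral => x _ do rewrite e EFinM.
rewrite integralZl //=; last exact: integrable_normal_pdf.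
rewrite integral_normal_pdf mule1 /normal_peak invrK sg2; congr (k * Num.sqrt _)%:E.
by rewrite -mulr_natr; field; rewrite gt_eqF.
Qed.

Lemma integral_RnS n (f : 'rV[R]_n.+1 -> \bar R) : integral_Rn f =
  (\int[@lebesgue_measure R]_(x in [set: R])
      integral_Rn (fun v : 'rV[R]_n => f (row_mx (const_mx x : 'rV[R]_1) v)))%E.
Proof. by []. Qed.

Lemma bilin_row_mx_schur n (A : 'M[R]_(1 + n)) (m : 'rV[R]_(1 + n)) x v :
  posdef A ->
  bilin (row_mx (const_mx x) v - m) A (row_mx (const_mx x) v - m) =
  schur_compl A * (x - lsubmx m 0 0) ^+ 2 +
  bilin (v - (rsubmx m + (x - lsubmx m 0 0) *: schur_shift A)) (drsubmx A)
        (v - (rsubmx m + (x - lsubmx m 0 0) *: schur_shift A)).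
Proof.
move=> pA; have -> : row_mx (const_mx x) v - m = row_mx (x - lsubmx m 0 0)%:M (v - rsubmx m).
  rewrite -{1}[m]hsubmxK opp_row_mx add_row_mx; congr row_mx.
  by apply/matrixP => i j; rewrite !ord1 !mxE eqxx mulr1n.
by rewrite bilin_schur ?pA.1 ?posdef_drsub_unitmx // opprD addrA.
Qed.

(* Integrate out the first coordinate last: by bilin_row_mx_schur the inner
   integral over the other coordinates is a Gaussian integral in dimension n
   whose value is a one-dimensional Gaussian in the first coordinate. *)
Lemma integral_Rn_gauss n (A : 'M[R]_n) (m : 'rV[R]_n) (k : R) : posdef A ->
  integral_Rn (fun z => (k * expR (- bilin (z - m) A (z - m) / 2))%:E) =
  (k * Num.sqrt ((2 * pi) ^+ n / \det A))%:E.
Proof.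
elim: n A m k => [|n IH] A m k pA.
  by rewrite /= /bilin mxE big_ord0 oppr0 mul0r expR0 expr0 det_mx00 divr1 sqrtr1.
change 'M[R]_(1 + n) in A; change 'rV[R]_(1 + n) in m.
have dC := posdef_det_gt0 (posdef_drsub pA).
rewrite integral_RnS.
under eq_integral => x _.
  under eq_fun => v do rewrite bilin_row_mx_schur // opprD mulrDl expRD mulrA.
  rewrite IH; last exact: posdef_drsub.
  rewrite mulrAC; over.
rewrite integral_gauss1 ?schur_compl_gt0 //; congr EFin.
rewrite -[k * _ * _]mulrA -sqrtrM; last by rewrite divr_ge0 ?exprn_ge0 ?mulr_ge0 ?pi_ge0 ?ltW.
rewrite det_schur ?pA.1 ?posdef_drsub_unitmx // exprS; congr (k * Num.sqrt _).
by field; rewrite !gt_eqF ?schur_compl_gt0.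
Qed.

End GaussianIntegral.

Section GaussianCovariance.
Variable R : realType.

Lemma symplectic_mulmx_tr D : symplectic D *m (symplectic D)^T = 1%:M :> 'M[R]_(D + D).
Proof.
rewrite /symplectic tr_block_mx !trmx0 linearN /= trmx1 mulmx_block.
rewrite !mul0mx !mulmx0 !addr0 !add0r !mul1mx mulNmx mulmxN opprK mul1mx.
by rewrite -scalar_mx_block.
Qed.

Lemma mulmx_trmx_gt0 n (u : 'rV[R]_n) : u != 0 -> 0 < (u *m u^T) 0 0.
Proof.
have sq_ge0 i : true -> 0 <= u 0 i ^+ 2 by move=> _; exact: sqr_ge0.
have -> : (u *m u^T) 0 0 = \sum_i u 0 i ^+ 2.
  by rewrite mxE; apply: eq_bigr => i _; rewrite mxE expr2.
move=> u0; rewrite lt_def sumr_ge0 ?andbT //; apply: contra u0 => /eqP u2_0.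
apply/eqP/matrixP => i j; rewrite ord1 mxE; apply/eqP.
by rewrite -sqrf_eq0 (psumr_eq0P sq_ge0 u2_0).
Qed.

(* If u V u <= 0 for some u != 0, the uncertainty relation fails for the pair
   (u, t u Omega) with t > 0 small: its symplectic term t |u|^2 beats t^2. *)
Lemma gaussian_cov_posdef D (V : 'M[R]_(D + D)) : gaussian_cov V -> posdef V.
Proof.
case=> sV uncertainty; split => // u u0; rewrite ltNge; apply/negP => uVu_le0.
pose w := u *m symplectic D; pose B := bilin w V w.
have c0 := mulmx_trmx_gt0 u0; set c := (u *m u^T) 0 0 in c0.
pose t := c / (`|B| + 1).
have t0 : 0 < t by rewrite divr_gt0.
have tB : t * (`|B| + 1) = c by rewrite divfK ?gt_eqF.
have uw : bilin u (symplectic D) w = c.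
  by rewrite /bilin trmx_mul mulmxA -(mulmxA u) symplectic_mulmx_tr mulmx1.
have := uncertainty u (t *: w).
rewrite !bilinZl !bilinZr uw -/B.
have tt0 : 0 < t * t by rewrite mulr_gt0.
have tBt : t * (t * B) <= t * t * `|B|.
  by rewrite mulrA; apply: ler_wpM2l; [exact: ltW | exact: ler_norm].
have tc : t * c = t * t * `|B| + t * t by rewrite -tB; ring.
lra.
Qed.

End GaussianCovariance.

Section RenyiGaussian.
Variable R : realType.

Lemma integral_Rn_gauss_wigner_powR D (m : 'rV[R]_(D + D)) V p :
  posdef V -> 0 < p ->
  integral_Rn (fun z => (gauss_wigner m V z `^ p)%:E) =
  (((2 * pi) ^+ (D + D) * \det V) `^ ((1 - p) / 2) / p ^+ D)%:E.
Proof.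
move=> pV p0; set N := (2 * pi) ^+ (D + D) * \det V.
have N0 : 0 < N by rewrite mulr_gt0 ?exprn_gt0 ?mulr_gt0 ?pi_gt0 ?posdef_det_gt0.
have -> : (fun z => (gauss_wigner m V z `^ p)%:E) = fun z =>
    ((N `^ (p / 2))^-1 * expR (- bilin (z - m) (p *: invmx V) (z - m) / 2))%:E.
  apply/funext => z; rewrite /gauss_wigner -/N powRM ?expR_ge0 ?invr_ge0 ?sqrtr_ge0 //.
  rewrite -[(Num.sqrt N)^-1]powR_inv1 ?sqrtr_ge0 // -powRrM mulN1r powRN.
  rewrite -powR12_sqrt ?ltW // -powRrM [2^-1 * p]mulrC.
  by congr EFin; rewrite [LHS]mulrC -expRM bilinZm; congr (_ * expR _); ring.
rewrite integral_Rn_gauss; last exact/posdefZ/posdefV.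
congr EFin.
have -> : (2 * pi) ^+ (D + D) / \det (p *: invmx V) = N / (p ^+ D) ^+ 2.
  rewrite detZ det_inv -exprM muln2 -addnn /N.
  by field; rewrite !gt_eqF ?posdef_det_gt0 // exprn_gt0.
rewrite sqrtrM ?ltW // sqrtrV ?sqrtr_sqr ?ger0_norm ?exprn_ge0 ?ltW //.
rewrite -powR12_sqrt ?ltW // mulrA [(_ `^ _)^-1 * _]mulrC -powRB ?(gt_eqF N0) ?implybT //.
by congr (N `^ _ / _); field.
Qed.

Lemma renyi_power_gauss_wigner D (m : 'rV[R]_(D + D)) V p :
  (0 < D)%N -> posdef V -> 1 < p ->
  renyi_power p (gauss_wigner m V) =
  2 * pi * p `^ (p - 1)^-1 * \det V `^ (D + D)%:R^-1.
Proof.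
move=> D0 pV p1; have p0 : 0 < p by apply: lt_trans p1.
have dV := posdef_det_gt0 pV.
have pi2 : 0 < 2 * pi :> R by rewrite mulr_gt0 ?pi_gt0.
have a0 : 0 < (2 * pi) ^+ (D + D) :> R by exact: exprn_gt0.
rewrite /renyi_power /renyi_entropy integral_Rn_gauss_wigner_powR ?ltW //=.
rewrite ln_div ?posrE ?powR_gt0 ?exprn_gt0 ?mulr_gt0 //.
rewrite ln_powR lnM ?posrE ?exprn_gt0 // !lnXn //.
have -> : 2 * pi * p `^ (p - 1)^-1 * \det V `^ (D + D)%:R^-1 =
    expR (ln (2 * pi) + (p - 1)^-1 * ln p + (D + D)%:R^-1 * ln (\det V)).
  by rewrite !expRD lnK ?posrE // /powR !gt_eqF.
congr expR; rewrite -[ln (2 * pi) *+ _]mulr_natr -[ln p *+ _]mulr_natr natrD.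
have D0' : D%:R != 0 :> R by rewrite pnatr_eq0 -lt0n.
have p1' : p - 1 != 0 by rewrite subr_eq0 gt_eqF.
have p1'' : 1 - p != 0 by rewrite subr_eq0 lt_eqF.
by field; rewrite D0' p1' p1'' andbT -natrD pnatr_eq0 -lt0n addn_gt0 D0.
Qed.

End RenyiGaussian.

Section GaussianConvolution.
Variables (R : realType) (D : nat) (mX mY : 'rV[R]_(D + D)) (VX VY : 'M[R]_(D + D)).
Variable tau : R.
Hypotheses (pX : posdef VX) (pY : posdef VY) (tau0 : 0 < tau) (tau1 : tau < 1).

Let s := Num.sqrt tau.
Let c := Num.sqrt (1 - tau).
Let P := invmx VX.
Let Q := invmx VY.
Let al := (1 - tau) / tau.
(* G is the inverse covariance of the integration variable of quantum_conv
   once the output point is fixed; al = c^2 / s^2. *)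
Let G := al *: P + Q.
Let W := tau *: VX + (1 - tau) *: VY.
Let mu := s *: mX + c *: mY.

Let tau1' : 0 < 1 - tau. Proof. by rewrite subr_gt0. Qed.
Let s0 : s != 0. Proof. by rewrite gt_eqF ?sqrtr_gt0. Qed.
Let s2 : s ^+ 2 = tau. Proof. by rewrite sqr_sqrtr ?ltW. Qed.
Let c2 : c ^+ 2 = 1 - tau. Proof. by rewrite sqr_sqrtr ?ltW. Qed.
Let pP : posdef P. Proof. exact: posdefV. Qed.
Let pG : posdef G.
Proof. by apply: posdefD; [apply: posdefZ; rewrite ?divr_gt0 | exact: posdefV]. Qed.
Let pW : posdef W. Proof. by apply: posdefD; apply: posdefZ. Qed.
Let uX : VX \in unitmx. Proof. exact: posdef_unitmx. Qed.
Let uY : VY \in unitmx. Proof. exact: posdef_unitmx. Qed.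
Let uG : G \in unitmx. Proof. exact: posdef_unitmx. Qed.

Lemma conv_cov_factor : W = tau *: (VX *m G *m VY).
Proof.
rewrite /W /G mulmxDr mulmxDl -scalemxAr mulmxV // -scalemxAl mul1mx.
rewrite -mulmxA mulVmx // mulmx1 scalerDr scalerA.
by rewrite /al mulrC divfK ?gt_eqF // addrC.
Qed.

Lemma invmx_conv_cov : invmx W = tau^-1 *: (P - al *: (P *m invmx G *m P)).
Proof.
apply: mulmx1_invmx.
have PGP : (P - al *: (P *m invmx G *m P)) *m VX *m G = Q.
  rewrite mulmxBl -scalemxAl -!mulmxA mulVmx // !mulmx1 mulmxBl mul1mx.
  by rewrite -scalemxAl -mulmxA mulVmx // mulmx1 /G addrC addKr.
rewrite conv_cov_factor -scalemxAl -scalemxAr scalerA mulVf ?gt_eqF // scale1r.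
by rewrite !mulmxA PGP mulVmx.
Qed.

(* Completing the square in the integration variable z. *)
Lemma conv_exponent (z z' : 'rV[R]_(D + D)) :
  let zG := mY + (c / tau) *: ((z' - mu) *m P *m invmx G) in
  bilin (s^-1 *: (z' - c *: z) - mX) P (s^-1 *: (z' - c *: z) - mX) +
  bilin (z - mY) Q (z - mY) =
  bilin (z - zG) G (z - zG) + bilin (z' - mu) (invmx W) (z' - mu).
Proof.
move=> zG.
have -> : s^-1 *: (z' - c *: z) - mX = s^-1 *: ((z' - mu) - c *: (z - mY)).
  by apply/matrixP => i j; rewrite /mu !mxE; field.
have -> : z - zG = (z - mY) - (c / tau) *: ((z' - mu) *m P *m invmx G).
  by rewrite opprD addrA.
rewrite invmx_conv_cov.
have GPG u v : bilin ((c / tau) *: (u *m P *m invmx G)) G v = (c / tau) * bilin u P v.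
  by rewrite bilinZl !bilinMl mulVmx // mulmx1.
have PGP u : bilin ((c / tau) *: (u *m P *m invmx G)) P u =
    (c / tau) * bilin u (P *m invmx G *m P) u.
  by rewrite bilinZl !bilinMl mulmxA.
move: (z' - mu) (z - mY) GPG PGP => u y GPG PGP.
move: (GPG u) (PGP u); move: ((c / tau) *: (u *m P *m invmx G)) => w wG wP.
rewrite !bilinZl !bilinZr !bilinDl !bilinDr !bilinNl !bilinNr !bilinZl !bilinZr.
rewrite (bilin_sym y w pG.1) (bilin_sym y u pP.1) !wG (bilin_sym u w pP.1) wP.
rewrite /G bilinDm !bilinZm bilinDm bilinNm bilinZm /al -c2 -s2.
by field.
Qed.

Lemma quantum_conv_gauss_wigner :
  quantum_conv tau (gauss_wigner mX VX) (gauss_wigner mY VY) = gauss_wigner mu W.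
Proof.
apply/funext => z'; rewrite /quantum_conv.
set a : R := (2 * pi) ^+ (D + D).
set NX := Num.sqrt (a * \det VX); set NY := Num.sqrt (a * \det VY).
set e := expR (- bilin (z' - mu) (invmx W) (z' - mu) / 2).
have -> : integral_Rn (fun z => (gauss_wigner mX VX (s^-1 *: (z' - c *: z)) *
      gauss_wigner mY VY z)%:E) = (e / (NX * NY) * Num.sqrt (a / \det G))%:E.
  rewrite -(integral_Rn_gauss (mY + (c / tau) *: ((z' - mu) *m P *m invmx G)) _ pG).
  congr integral_Rn; apply/funext => z; congr EFin.
  rewrite /gauss_wigner -/a -/NX -/NY mulrACA -expRD -invfM [RHS]mulrAC -expRD.
  congr (expR _ * _); have := conv_exponent z z'; rewrite /= -/P -/Q; lra.
have a0 : 0 < a by apply/exprn_gt0/mulr_gt0/pi_gt0.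
have aX : 0 < a * \det VX by rewrite mulr_gt0 ?posdef_det_gt0.
have aY : 0 < a * \det VY by rewrite mulr_gt0 ?posdef_det_gt0.
have aG : 0 < a / \det G by rewrite divr_gt0 ?posdef_det_gt0.
have aW : 0 < a * \det W by rewrite mulr_gt0 ?posdef_det_gt0.
have norm : (tau ^+ D)^-1 * ((NX * NY)^-1 * Num.sqrt (a / \det G)) =
    (Num.sqrt (a * \det W))^-1.
  have lhs0 : 0 <= (tau ^+ D)^-1 * ((NX * NY)^-1 * Num.sqrt (a / \det G)).
    apply: mulr_ge0; first by rewrite invr_ge0 exprn_ge0 ?ltW.
    by rewrite mulr_ge0 ?invr_ge0 ?mulr_ge0 ?sqrtr_ge0.
  have rhs0 : 0 <= (Num.sqrt (a * \det W))^-1 by rewrite invr_ge0 sqrtr_ge0.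
  apply/eqP; rewrite -(eqrXn2 (isT : 0 < 2)%N lhs0 rhs0); apply/eqP.
  rewrite !exprMn !exprVn !exprMn !sqr_sqrtr ?ltW //.
  rewrite conv_cov_factor detZ !det_mulmx exprD -expr2.
  have dX := posdef_det_gt0 pX; have dY := posdef_det_gt0 pY.
  have dG := posdef_det_gt0 pG.
  by field; rewrite !gt_eqF // exprn_gt0.
by rewrite /= /gauss_wigner -norm -/e; ring.
Qed.

End GaussianConvolution.

Theorem theorem2 (R : realType) (D : nat) (hD : (1 <= D)%N)
  (mX mY : 'rV[R]_(D + D)) (VX VY : 'M[R]_(D + D))
  (hX : gaussian_cov VX) (hY : gaussian_cov VY)
  (tau : R) (htau0 : 0 < tau) (htau1 : tau < 1)
  (p : R) (hp : 1 < p) (kappa : R) (hkappa : (p + 1) / 2 <= kappa) :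
  (renyi_power p (quantum_conv tau (gauss_wigner mX VX) (gauss_wigner mY VY)))
    `^ kappa >=
  tau `^ kappa * (renyi_power p (gauss_wigner mX VX)) `^ kappa
  + (1 - tau) `^ kappa * (renyi_power p (gauss_wigner mY VY)) `^ kappa.
Proof.
have pX := gaussian_cov_posdef hX; have pY := gaussian_cov_posdef hY.
have tau01 : 0 < tau < 1 by rewrite htau0 htau1.
have k1 : 1 <= kappa by apply: le_trans hkappa; rewrite ler_pdivlMr //; lra.
rewrite quantum_conv_gauss_wigner // !renyi_power_gauss_wigner //;
  last by apply: posdefD; apply: posdefZ; rewrite ?subr_gt0.
case: D hD mX mY VX VY hX hY pX pY => // D _ mX mY VX VY _ _ pX pY.
set C := 2 * pi * _.
have C0 : 0 < C by rewrite !mulr_gt0 ?pi_gt0 ?powR_gt0 ?(lt_trans ltr01 hp).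
apply: powR_convex_superadd => //; try exact: mulr_ge0 (ltW C0) (powR_ge0 _ _).
rewrite mulrCA [(1 - tau) * _]mulrCA -mulrDr ler_pM2l //.
exact: (@minkowski_det_convex _ (D + D.+1)).
Qed.
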